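(* Suppose the cost norm is $\|\cdot\|=\|\cdot\|_2$ and the Margin assumption holds. Let $\{y_t\}_{t\ge1}$ be generated by the gradient-based SMM algorithm with any positive stepsizes $\{\gamma_t\}$ (with the initialization terminating). Then $y_*^\top v(y_t)\ge0$ for all $t\ge1$ (equivalently $y_*^\top y_t\ge0$).
   Context: Setting: $\mathcal{A}\subseteq\mathbb{R}^d$, labels $\ell(A)\in\{\pm1\}$; $\operatorname{sign}(0)=+1$; cost constant $c>0$; norm $\|\cdot\|=\|\cdot\|_2$ (self-dual), $v(y)=y/\|y\|_2$ for $y\ne0$, $v(0)=0$. Predicted label $\hat\ell(x,y,b)=\operatorname{sign}(y^\top x+b-2\|y\|_2/c)$. Response: for $y\ne0$, $r(A,y,b)=A+(\tfrac2c-\tfrac{y^\top A+b}{\|y\|_2})v(y)$ if $0\le\tfrac{y^\top A+b}{\|y\|_2}<\tfrac2c$, else $A$. Proxy: for $y\ne0$, $s(A,y,b)=A-\tfrac{y^\top A+b}{\|y\|_2}v(y)$ if $0\le\tfrac{y^\top A+b}{\|y\|_2}<\tfrac2c$ and $\ell(A)=-1$; $=A+(\tfrac2c-\tfrac{y^\top A+b}{\|y\|_2})v(y)$ if the range condition holds and $\ell(A)=+1$; $=A$ otherwise; $r(A,0,b)=s(A,0,b)=A$. Margin function $h(y,b;\widetilde{\mathcal{A}}^+,\widetilde{\mathcal{A}}^-)=\min\{\min_{x\in\widetilde{\mathcal{A}}^+}(y^\top x+b),\min_{x\in\widetilde{\mathcal{A}}^-}(-y^\top x-b)\}$. Margin assumption: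 $d_*:=\max_{y\ne0,b}\min_{A\in\mathcal{A}}\ell(A)\frac{y^\top A+b}{\|y\|_2}$ attained at some $(y_*,b_* )$, $y_*\ne0$, $d_*>0$. Gradient-based SMM algorithm: initialization as follows: $\widetilde{\mathcal{A}}_0^\pm=\emptyset$, $(y,b)=(0,1)$; each arriving agent (responding with its true $A$) is added to $\widetilde{\mathcal{A}}_0^+$ or $\widetilde{\mathcal{A}}_0^-$ by label; then $b:=-1$ if $\widetilde{\mathcal{A}}_0^+=\emptyset$, else $b:=+1$ if $\widetilde{\mathcal{A}}_0^-=\emptyset$; stop when both nonempty; $(y_1,b_1)$ is an optimal solution of $\max\{h(y,b;\widetilde{\mathcal{A}}_0^+,\widetilde{\mathcal{A}}_0^-):\|y\|_2\le1,b\in\mathbb{R}\}$; set $z_1=y_1$. For $t\ge1$: agent $A_t\in\mathcal{A}$ is shown $(y_t,b_t)$, responds $r(A_t,y_t,b_t)$, is predicted $\hat\ell(r(A_t,y_t,b_t),y_t,b_t)$; $s(A_t,y_t,b_t)$ is appended to $\widetilde{\mathcal{A}}_{t-1}^+$ if $\ell(A_t)=+1$, else to $\widetilde{\mathcal{A}}_{t-1}^-$, giving $\widetilde{\mathcal{A}}_t^\pm$; choose $s_t^+\in\arg\min_{x\in\widetilde{\mathcal{A}}_t^+}z_t^\top x$, $s_t^-\in\arg\max_{x\in\widetilde{\mathcal{A}}_t^-}z_t^\top x$; set $z_{t+1}=\Pi_{B}(z_t+\gamma_t(s_t^+-s_t^-))$ where $\Pi_B$ is Euclidean projection onto the unit $\ell_2$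 ball; $y_{t+1}=\frac{\sum_{\tau=1}^{t+1}\gamma_\tau z_\tau}{\sum_{\tau=1}^{t+1}\gamma_\tau}$ and $b_{t+1}=-\tfrac12\big(\min_{x\in\widetilde{\mathcal{A}}_t^+}y_{t+1}^\top x+\max_{x\in\widetilde{\mathcal{A}}_t^-}y_{t+1}^\top x\big)$. *)

From mathcomp Require Import all_boot all_order all_algebra.
From mathcomp Require Import reals.
Set Implicit Arguments. Unset Strict Implicit. Unset Printing Implicit Defensive.
Import Order.TTheory GRing.Theory Num.Theory.
Local Open Scope ring_scope.

Section SMM.
Variables (R : realType) (d : nat).
Notation vec := 'rV[R]_d.

Definition dotp (u w : vec) : R := \sum_(i < d) u 0 i * w 0 i.
Definition norm2 (u : vec) : R := Num.sqrt (dotp u u).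

Definition vdir (u : vec) : vec := if u == 0 then 0 else (norm2 u)^-1 *: u.

Definition projB (u : vec) : vec := if norm2 u <= 1 then u else (norm2 u)^-1 *: u.

Definition minseq (s : seq R) : R :=
  match s with [::] => 0 | x :: s' => foldr Num.min x s' end.
Definition maxseq (s : seq R) : R :=
  match s with [::] => 0 | x :: s' => foldr Num.max x s' end.

Definition hmargin (y : vec) (b : R) (Ap Am : seq vec) : R :=
  Num.min (minseq [seq dotp y x + b | x <- Ap]) (minseq [seq - dotp y x - b | x <- Am]).

Definition smargin (lab : vec -> R) (y : vec) (b : R) (A : vec) : R :=
  lab A * (dotp y A + b) / norm2 y.

Definition proxy (c : R) (lab : vec -> R) (A y : vec) (b : R) : vec :=
  if y == 0 then A else
  let m := (dotp y A + b) / norm2 y in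
  if (0 <= m) && (m < 2 / c) then
    (if lab A == 1 then A + (2 / c - m) *: vdir y else A - m *: vdir y)
  else A.

End SMM.

From mathcomp Require Import all_boot all_order all_algebra.
From mathcomp Require Import reals.
From mathcomp Require Import ring lra.
Set Implicit Arguments. Unset Strict Implicit. Unset Printing Implicit Defensive.
Import Order.TTheory GRing.Theory Num.Theory.
Local Open Scope ring_scope.

(* The margin-optimal pair (ys, bs) puts every agent strictly on the side of
   the hyperplane ys . x + bs = 0 given by its label. Since y_1 maximizes the
   margin over the unit ball, ys . y_1 >= 0: otherwise reflecting y_1 in the
   hyperplane orthogonal to ys keeps its norm and strictly increases the
   margin. Inductively, while ys . y_t >= 0 the proxies only push agents
   further towards their own side, so the stored proxies stay separated; then
   ys . (s_t^+ - s_t^-) > 0, and neither the projection onto the ball nor the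
   averaging with positive weights can make the ys-component negative. *)

Section Dotp.
Variables (R : realType) (d : nat).
Implicit Types (u v w : 'rV[R]_d) (a : R).

Lemma dotpC u v : dotp u v = dotp v u.
Proof. by apply: eq_bigr => i _; rewrite mulrC. Qed.

Lemma dotpDr u v w : dotp u (v + w) = dotp u v + dotp u w.
Proof.
by rewrite /dotp -big_split; apply: eq_bigr => i _; rewrite mxE mulrDr.
Qed.

Lemma dotpZr u v a : dotp u (a *: v) = a * dotp u v.
Proof. by rewrite /dotp mulr_sumr; apply: eq_bigr => i _; rewrite mxE mulrCA. Qed.

Lemma dotpNr u v : dotp u (- v) = - dotp u v.
Proof. by rewrite -scaleN1r dotpZr mulN1r. Qed.

Lemma dotpBr u v w : dotp u (v - w) = dotp u v - dotp u w.
Proof. by rewrite dotpDr dotpNr. Qed.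

Lemma dotp0r u : dotp u 0 = 0.
Proof. by rewrite -(scale0r (0 : 'rV[R]_d)) dotpZr mul0r. Qed.

Lemma dotpDl u v w : dotp (v + w) u = dotp v u + dotp w u.
Proof. by rewrite !(dotpC _ u) dotpDr. Qed.

Lemma dotpZl u v a : dotp (a *: v) u = a * dotp v u.
Proof. by rewrite !(dotpC _ u) dotpZr. Qed.

Lemma dotpBl u v w : dotp (v - w) u = dotp v u - dotp w u.
Proof. by rewrite !(dotpC _ u) dotpBr. Qed.

Lemma dotp_sumr u (I : Type) (r : seq I) (P : pred I) (F : I -> 'rV[R]_d) :
  dotp u (\sum_(i <- r | P i) F i) = \sum_(i <- r | P i) dotp u (F i).
Proof. exact: (big_morph (dotp u) (dotpDr u) (dotp0r u)). Qed.

Lemma dotpp_gt0 u : u != 0 -> 0 < dotp u u.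
Proof.
move=> u_neq0; have ge0 i : 0 <= u 0 i * u 0 i by rewrite -expr2 sqr_ge0.
rewrite lt_def sumr_ge0 // andbT; apply: contraNneq u_neq0 => u0.
apply/eqP/rowP => i; apply/eqP; rewrite mxE -sqrf_eq0 expr2.
by rewrite (psumr_eq0P (fun i _ => ge0 i) u0).
Qed.

Lemma norm2_ge0 u : 0 <= norm2 u.
Proof. exact: sqrtr_ge0. Qed.

Lemma norm2_reflection u y : u != 0 ->
  norm2 (y - (2 * dotp u y / dotp u u) *: u) = norm2 y.
Proof.
move=> /dotpp_gt0/lt0r_neq0 uu_neq0; rewrite /norm2; congr Num.sqrt.
rewrite !(dotpBl, dotpBr, dotpZl, dotpZr) (dotpC y u).
by field.
Qed.

Lemma dotp_vdir_ge0 u w : 0 <= dotp u w -> 0 <= dotp u (vdir w).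
Proof.
rewrite /vdir; case: ifP => _ uw_ge0; first by rewrite dotp0r.
by rewrite dotpZr mulr_ge0 // invr_ge0 norm2_ge0.
Qed.

Lemma dotp_projB_ge0 u w : 0 <= dotp u w -> 0 <= dotp u (projB w).
Proof.
rewrite /projB; case: ifP => // _ uw_ge0.
by rewrite dotpZr mulr_ge0 // invr_ge0 norm2_ge0.
Qed.

Lemma dotp_wavg_ge0 u (w : nat -> R) (v : nat -> 'rV[R]_d) m n :
  (forall i, (m <= i < n)%N -> 0 <= w i) ->
  (forall i, (m <= i < n)%N -> 0 <= dotp u (v i)) ->
  0 <= dotp u ((\sum_(m <= i < n) w i)^-1 *: \sum_(m <= i < n) w i *: v i).
Proof.
move=> w_ge0 uv_ge0; rewrite dotpZr dotp_sumr mulr_ge0 //.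
  by rewrite invr_ge0 big_nat_cond sumr_ge0 // => i /andP[/w_ge0].
rewrite big_nat_cond sumr_ge0 // => i /andP[mi _].
by rewrite dotpZr mulr_ge0 ?w_ge0 ?uv_ge0.
Qed.

End Dotp.

Section Minseq.
Variable R : realType.

Lemma minseq_le (s : seq R) x : x \in s -> minseq s <= x.
Proof.
case: s => // x0 s; rewrite inE /= => /orP[/eqP ->|].
  by elim: s => //= y s IH; rewrite ge_min IH orbT.
elim: s => //= y s IH; rewrite inE => /orP[/eqP ->|/IH le_x].
  by rewrite ge_min lexx.
by rewrite ge_min le_x orbT.
Qed.

Lemma minseq_mem (s : seq R) : s != [::] -> minseq s \in s.
Proof.
case: s => // x0 s _ /=; elim: s => [|y s IH]; first by rewrite inE.
rewrite /= /Num.min; case: ifP => _; first by rewrite !inE eqxx orbT.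
by move: IH; rewrite !inE => /orP[->|->]; rewrite ?orbT.
Qed.

Lemma minseq_map_lt (T : eqType) (f g : T -> R) (s : seq T) : s != [::] ->
  {in s, forall x, f x < g x} ->
  minseq [seq f x | x <- s] < minseq [seq g x | x <- s].
Proof.
move=> s_neq0 lt_fg.
have /mapP[x xs ->] : minseq [seq g x | x <- s] \in [seq g x | x <- s].
  by apply: minseq_mem; rewrite -size_eq0 size_map size_eq0.
by apply: le_lt_trans (lt_fg x xs); apply/minseq_le/map_f.
Qed.

End Minseq.

Section Separation.
Variables (R : realType) (d : nat).
Implicit Types (u y : 'rV[R]_d) (P M : seq 'rV[R]_d).

Definition separates u (bu : R) P M :=
  {in P, forall x, 0 < dotp u x + bu} /\ {in M, forall x, dotp u x + bu < 0}.

Lemma hmargin_shift_lt u bu P M y b (s : R) :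
  separates u bu P M -> P != [::] -> M != [::] -> 0 < s ->
  hmargin y b P M < hmargin (y + s *: u) (b + s * bu) P M.
Proof.
move=> [P_pos M_neg] P_neq0 M_neq0 s_gt0.
rewrite /hmargin lt_min !gt_min; apply/andP; split; apply/orP; [left|right].
- apply: minseq_map_lt => // x /P_pos ux_pos; rewrite dotpDl dotpZl.
  have : 0 < s * (dotp u x + bu) by rewrite mulr_gt0.
  lra.
- apply: minseq_map_lt => // x /M_neg ux_neg; rewrite dotpDl dotpZl.
  have : s * (dotp u x + bu) < 0 by rewrite pmulr_rlt0.
  lra.
Qed.

Lemma margin_optimal_dotp_ge0 u bu P M y b :
  separates u bu P M -> P != [::] -> M != [::] -> norm2 y <= 1 ->
  (forall yy bb, norm2 yy <= 1 -> hmargin yy bb P M <= hmargin y b P M) ->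
  0 <= dotp u y.
Proof.
move=> sep P_neq0 M_neq0 y_le1 y_opt; rewrite leNgt; apply/negP => uy_lt0.
have u_neq0 : u != 0 by apply: contraTneq uy_lt0 => ->; rewrite dotpC dotp0r ltxx.
set k := 2 * dotp u y / dotp u u.
have k_lt0 : k < 0.
  by rewrite /k pmulr_llt0 ?invr_gt0 ?dotpp_gt0 // pmulr_rlt0.
have := y_opt (y - k *: u) (b - k * bu).
rewrite norm2_reflection // => /(_ y_le1).
clearbody k; apply/negP; rewrite -ltNge -scaleNr -mulNr.
by apply: hmargin_shift_lt; rewrite // oppr_gt0.
Qed.

End Separation.

Section Sides.
Variables (R : realType) (d : nat).
Implicit Types (u y a x : 'rV[R]_d) (P M : seq 'rV[R]_d) (lab : 'rV[R]_d -> R).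

Definition on_side (l : R) u (bu : R) x :=
  if l == 1 then 0 < dotp u x + bu else dotp u x + bu < 0.

Lemma smargin_on_side lab u bu a : lab a = 1 \/ lab a = -1 ->
  0 < smargin lab u bu a -> on_side (lab a) u bu a.
Proof.
move=> lab_pm; rewrite /smargin /on_side.
have [->|u_neq0] := eqVneq (norm2 u) 0; first by rewrite invr0 mulr0 ltxx.
have u_gt0 : 0 < norm2 u by rewrite lt_def u_neq0 norm2_ge0.
rewrite pmulr_lgt0 ?invr_gt0 //.
by case: lab_pm => ->; rewrite ?eqxx ?mul1r // eqNr oner_eq0 mulN1r oppr_gt0.
Qed.

Lemma on_side_proxy c lab u bu a y b : 0 <= dotp u y ->
  on_side (lab a) u bu a -> on_side (lab a) u bu (proxy c lab a y b).
Proof.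
move=> /dotp_vdir_ge0 uv_ge0; rewrite /on_side /proxy.
case: ifP => _ side_a; case: eqP => // _; case: ifP => // /andP[m_ge0 m_lt];
  rewrite ?(dotpDr, dotpNr, dotpZr).
- have : 0 <= (2 / c - (dotp y a + b) / norm2 y) * dotp u (vdir y).
    by rewrite mulr_ge0 // subr_ge0 ltW.
  lra.
- have : 0 <= (dotp y a + b) / norm2 y * dotp u (vdir y) by rewrite mulr_ge0.
  lra.
Qed.

Lemma separates_filter lab u bu (s : seq 'rV[R]_d) :
  {in s, forall a, on_side (lab a) u bu a} ->
  separates u bu [seq a <- s | lab a == 1] [seq a <- s | lab a != 1].
Proof.
move=> side; split=> a; rewrite mem_filter => /andP[lab_a /side];
  by rewrite /on_side ?(negbTE lab_a) ?lab_a.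
Qed.

Lemma separates_rcons (l : R) u bu P M x :
  separates u bu P M -> on_side l u bu x ->
  separates u bu (if l == 1 then rcons P x else P)
                 (if l == 1 then M else rcons M x).
Proof.
move=> [P_pos M_neg]; rewrite /on_side; case: ifP => _ side_x; split=> // z;
  rewrite mem_rcons inE => /orP[/eqP -> //|]; by [apply: P_pos | apply: M_neg].
Qed.

End Sides.

Section Trajectory.
Variables (R : realType) (d : nat) (c : R) (lab : 'rV[R]_d -> R).
Variables (ys : 'rV[R]_d) (bs : R).
Variables (gamma : nat -> R) (A : nat -> 'rV[R]_d) (Ap Am : nat -> seq 'rV[R]_d).
Variables (y z sp sm : nat -> 'rV[R]_d) (b : nat -> R).

Hypothesis gamma_gt0 : forall t, (0 < t)%N -> 0 < gamma t.
Hypothesis A_on_side : forall t, (0 < t)%N -> on_side (lab (A t)) ys bs (A t).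
Hypothesis Ap_succ : forall t, (0 < t)%N ->
  Ap t = if lab (A t) == 1 then rcons (Ap t.-1) (proxy c lab (A t) (y t) (b t))
         else Ap t.-1.
Hypothesis Am_succ : forall t, (0 < t)%N ->
  Am t = if lab (A t) == 1 then Am t.-1
         else rcons (Am t.-1) (proxy c lab (A t) (y t) (b t)).
Hypothesis sp_in : forall t, (0 < t)%N -> sp t \in Ap t.
Hypothesis sm_in : forall t, (0 < t)%N -> sm t \in Am t.
Hypothesis z_succ : forall t, (0 < t)%N ->
  z t.+1 = projB (z t + gamma t *: (sp t - sm t)).
Hypothesis y_succ : forall t, (0 < t)%N ->
  y t.+1 = (\sum_(1 <= i < t.+2) gamma i)^-1 *:
            \sum_(1 <= i < t.+2) gamma i *: z i.

Lemma separates_succ t : (0 < t)%N ->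
  separates ys bs (Ap t.-1) (Am t.-1) -> 0 <= dotp ys (y t) ->
  separates ys bs (Ap t) (Am t).
Proof.
move=> t_gt0 sep y_ge0; rewrite Ap_succ // Am_succ //.
by apply: separates_rcons => //; apply: on_side_proxy => //; apply: A_on_side.
Qed.

Lemma dotp_z_succ_ge0 t : (0 < t)%N ->
  separates ys bs (Ap t) (Am t) -> 0 <= dotp ys (z t) -> 0 <= dotp ys (z t.+1).
Proof.
move=> t_gt0 [P_pos M_neg] z_ge0; rewrite z_succ //; apply: dotp_projB_ge0.
have sp_pos := P_pos _ (sp_in t_gt0); have sm_neg := M_neg _ (sm_in t_gt0).
rewrite dotpDr dotpZr dotpBr addr_ge0 // mulr_ge0 ?ltW ?gamma_gt0 //.
lra.
Qed.

Lemma dotp_trajectory_ge0 :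
  separates ys bs (Ap 0) (Am 0) -> 0 <= dotp ys (y 1) -> z 1 = y 1 ->
  forall n, 0 <= dotp ys (y n.+1).
Proof.
move=> sep0 y1_ge0 z1_def.
suff inv n : [/\ separates ys bs (Ap n) (Am n),
  forall i, (0 < i <= n.+1)%N -> 0 <= dotp ys (z i) & 0 <= dotp ys (y n.+1)].
  by move=> n; case: (inv n).
elim: n => [|n [sep_n z_ge0 y_ge0]].
  by split=> // i; rewrite -eqn_leq => /eqP <-; rewrite z1_def.
have sep_n1 := separates_succ (ltn0Sn n) sep_n y_ge0.
have z_n1_ge0 i : (0 < i <= n.+2)%N -> 0 <= dotp ys (z i).
  case/andP=> i_gt0; rewrite leq_eqVlt ltnS => /orP[/eqP ->|i_le].
    apply: (dotp_z_succ_ge0 (ltn0Sn n) sep_n1).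
    by apply: (z_ge0 n.+1); rewrite leqnn.
  by apply: z_ge0; rewrite i_gt0.
split=> //; rewrite y_succ //.
apply: dotp_wavg_ge0 => i /andP[i_gt0 i_lt]; first exact/ltW/gamma_gt0.
by apply: z_n1_ge0; rewrite i_gt0.
Qed.

End Trajectory.

Theorem mainTheorem12 (R : realType) (d : nat) (c : R) (hc : 0 < c)
  (Aset : 'rV[R]_d -> Prop) (lab : 'rV[R]_d -> R)
  (hlab : forall a, Aset a -> lab a = 1 \/ lab a = -1)
  (* margin assumption: (ys, bs) attains the max-min margin ds > 0 *)
  (ys : 'rV[R]_d) (bs ds : R)
  (hys : ys != 0) (hds : 0 < ds)
  (hmarg : forall a, Aset a -> ds <= smargin lab ys bs a)
  (hmax : forall (yy : 'rV[R]_d) (bb : R), yy != 0 ->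
            exists2 a, Aset a & smargin lab yy bb a <= ds)
  (* initialization phase: agents init (true responses), terminating *)
  (init init' : seq 'rV[R]_d) (alast : 'rV[R]_d)
  (hinitA : forall a, a \in init -> Aset a)
  (hinit_last : init = rcons init' alast)
  (hinit_stop : has (fun a => lab a == 1) init && has (fun a => lab a != 1) init)
  (hinit_first : ~~ (has (fun a => lab a == 1) init' && has (fun a => lab a != 1) init'))
  (* the algorithm's trajectory *)
  (gamma : nat -> R) (hgamma : forall t, (0 < t)%N -> 0 < gamma t)
  (A : nat -> 'rV[R]_d) (hA : forall t, (0 < t)%N -> Aset (A t))
  (Ap Am : nat -> seq 'rV[R]_d)
  (y z sp sm : nat -> 'rV[R]_d) (b : nat -> R)
  (hAp0 : Ap 0%N = [seq a <- init | lab a == 1])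
  (hAm0 : Am 0%N = [seq a <- init | lab a != 1])
  (hopt_feas : norm2 (y 1%N) <= 1)
  (hopt : forall (yy : 'rV[R]_d) (bb : R), norm2 yy <= 1 ->
            hmargin yy bb (Ap 0%N) (Am 0%N) <= hmargin (y 1%N) (b 1%N) (Ap 0%N) (Am 0%N))
  (hz1 : z 1%N = y 1%N)
  (hApS : forall t, (0 < t)%N ->
     Ap t = if lab (A t) == 1 then rcons (Ap t.-1) (proxy c lab (A t) (y t) (b t))
            else Ap t.-1)
  (hAmS : forall t, (0 < t)%N ->
     Am t = if lab (A t) == 1 then Am t.-1
            else rcons (Am t.-1) (proxy c lab (A t) (y t) (b t)))
  (hsp : forall t, (0 < t)%N ->
     sp t \in Ap t /\ forall x, x \in Ap t -> dotp (z t) (sp t) <= dotp (z t) x)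
  (hsm : forall t, (0 < t)%N ->
     sm t \in Am t /\ forall x, x \in Am t -> dotp (z t) x <= dotp (z t) (sm t))
  (hz : forall t, (0 < t)%N -> z t.+1 = projB (z t + gamma t *: (sp t - sm t)))
  (hy : forall t, (0 < t)%N ->
     y t.+1 = (\sum_(1 <= i < t.+2) gamma i)^-1 *: \sum_(1 <= i < t.+2) gamma i *: z i)
  (hb : forall t, (0 < t)%N ->
     b t.+1 = - (1 / 2) * (minseq [seq dotp (y t.+1) x | x <- Ap t]
                           + maxseq [seq dotp (y t.+1) x | x <- Am t])) :
  forall t, (0 < t)%N -> 0 <= dotp ys (vdir (y t)) /\ 0 <= dotp ys (y t).
Proof.
have side a : Aset a -> on_side (lab a) ys bs a.
  move=> a_in; have := lt_le_trans hds (hmarg a a_in).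
  exact: smargin_on_side (hlab a a_in).
have sep0 : separates ys bs (Ap 0) (Am 0).
  by rewrite hAp0 hAm0; apply: separates_filter => a /hinitA /side.
have [Ap0_neq0 Am0_neq0] : Ap 0 != [::] /\ Am 0 != [::].
  by move: hinit_stop; rewrite hAp0 hAm0 !has_filter => /andP.
have y1_ge0 := margin_optimal_dotp_ge0 sep0 Ap0_neq0 Am0_neq0 hopt_feas hopt.
have hsp_mem t t_gt0 := (hsp t t_gt0).1; have hsm_mem t t_gt0 := (hsm t t_gt0).1.
have A_side t t_gt0 := side (A t) (hA t t_gt0).
have y_ge0 := dotp_trajectory_ge0 hgamma A_side hApS hAmS hsp_mem hsm_mem hz hy
  sep0 y1_ge0 hz1.
by case=> // n _; split; [apply: dotp_vdir_ge0|]; apply: y_ge0.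
Qed.
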